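(* Let $R$ be a commutative elementary divisor domain and let $E=\mathrm{diag}(\varepsilon_1,\dots,\varepsilon_n)$, $\Phi=\mathrm{diag}(\varphi_1,\dots,\varphi_n)$ be nonsingular $d$-matrices with $\varphi_i\mid\varepsilon_i$ for all $i$. Then every class $\mathbf G_\Phi L=\{HL:H\in\mathbf G_\Phi\}$, $L\in\mathbf L(E,\Phi)$, contains exactly one element of $\mathbf V(E,\Phi)$ if and only if the following holds: for every index $i\in\{2,\dots,n\}$ such that $\varphi_i$ and $\varphi_{i-1}$ are not associates, every non-unit divisor $\delta$ of $\varphi_i/\varphi_{i-1}$ satisfies $\big(\delta,\ \frac{\varphi_i}{(\varphi_i,\varepsilon_{i-1})}\big)\ne1$.
   Context: Elementary divisor domain: commutative integral domain over which every matrix is equivalent to a $d$-matrix (diagonal $\mathrm{diag}(\varphi_1,\dots)$ with $\varphi_i\mid\varphi_{i+1}$). $\mathbf G_\Phi=\{H\in GL_n(R):\exists K\in GL_n(R),\ H\Phi=\Phi K\}$; $\mathbf L(E,\Phi)=\{L\in GL_n(R):\exists S\in M_n(R),\ LE=\Phi S\}$. For $f\in R$, $K(f)$ is a fixed complete system of representatives of the residue classes of $R$ modulo $fR$. The Kazimirskii set $\mathbf V(E,\Phi)$ is the set of lower unitriangular $n\times n$ matrices whose entry in position $(i,j)$, $i>j$, equals $\frac{\varphi_i}{(\varphi_i,\varepsilon_j)}k_{ij}$ with $k_{ij}\in K\big(\frac{(\varphi_i,\varepsilon_j)}{\varphi_j}\big)$. *)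

From HB Require Import structures.
From mathcomp Require Import all_boot all_order all_algebra.
Set Implicit Arguments. Unset Strict Implicit. Unset Printing Implicit Defensive.
Import Order.TTheory GRing.Theory Num.Theory.
Local Open Scope ring_scope.

Section Defs.
Variable R : idomainType.

Definition divides (a b : R) : Prop := exists c, b = c * a.

Definition assoc (a b : R) : Prop := divides a b /\ divides b a.

Definition is_gcd (a b g : R) : Prop :=
  [/\ divides g a, divides g b & forall d, divides d a -> divides d b -> divides d g].

Definition complete_residues (f : R) (S : pred R) : Prop :=
  forall a : R, exists! k, k \in S /\ divides f (a - k).

Definition is_dmx m n (D : 'M[R]_(m, n)) : Prop :=
  (forall (i : 'I_m) (j : 'I_n), (i : nat) <> j -> D i j = 0) /\
  (forall (i i' : 'I_m) (j j' : 'I_n), (i : nat) = j -> (i' : nat) = j' ->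
      (i' : nat) = i.+1 -> divides (D i j) (D i' j')).

Definition elementary_divisor_domain : Prop :=
  forall m n (A : 'M[R]_(m, n)), exists (P : 'M[R]_m) (Q : 'M[R]_n),
    [/\ P \in unitmx, Q \in unitmx & is_dmx (P *m A *m Q)].

(* diagonal entries of a nonsingular d-matrix diag(e_1,...,e_n) *)
Definition nonsing_dseq n (e : 'I_n -> R) : Prop :=
  (forall i, e i != 0) /\
  (forall i j : 'I_n, (j : nat) = i.+1 -> divides (e i) (e j)).

Definition diagm n (e : 'I_n -> R) : 'M[R]_n := diag_mx (\row_i e i).

Definition G_Phi n (Phi : 'M[R]_n) (H : 'M[R]_n) : Prop :=
  H \in unitmx /\ exists K : 'M[R]_n, K \in unitmx /\ H *m Phi = Phi *m K.

Definition L_set n (E Phi : 'M[R]_n) (L : 'M[R]_n) : Prop :=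
  L \in unitmx /\ exists S : 'M[R]_n, L *m E = Phi *m S.

(* Kazimirskii set V(E, Phi), relative to the chosen gcd function gcdf
   and the chosen systems of representatives K *)
Definition V_set n (gcdf : R -> R -> R) (K : R -> pred R)
    (eps phi : 'I_n -> R) (V : 'M[R]_n) : Prop :=
  (forall i, V i i = 1) /\
  (forall i j : 'I_n, (i < j)%N -> V i j = 0) /\
  (forall i j : 'I_n, (j < i)%N ->
     exists q f k : R,
       [/\ q * gcdf (phi i) (eps j) = phi i,
           f * phi j = gcdf (phi i) (eps j),
           k \in K f &
           V i j = q * k]).

End Defs.

(* The equations defining G_Phi and L(E, Phi) amount to the entrywise
   divisibilities phi_i | a_ij psi_j.

   Uniqueness: if V = W V' with W in G_Phi and V, V' Kazimirskii matrices, then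
   W = 1, column by column from the right.  Once the columns of W right of l
   are those of 1, V_il = W_il + V'_il for i > l with phi_i | W_il phi_l; both
   V_il and V'_il are phi_i/(phi_i, eps_l) times a representative modulo
   (phi_i, eps_l)/phi_l, which forces W_il = 0.

   Existence, by induction on n: the row u_j = (L^-1)_{1j} phi_j/phi_1 is
   unimodular; this is where the divisor condition enters, one index at a time,
   through the identity sum_k (L^-1)_{1k} L_{k1} = 1.  An elementary divisor
   domain is Bezout, so u is, up to a unit, the first row of an invertible
   matrix that is lower triangular below its first row, and this yields H in G_Phi with HL
   having first row e_1.  A second element of G_Phi reduces the first column to
   the chosen representatives, and the remaining block is handled inductively.

   Necessity: if delta | phi_i/phi_(i-1) is a non-unit with x delta + y r = 1,
   where r = phi_i/(phi_i, eps_(i-1)), the matrix with rows (x, -y) and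
   (r, delta) in positions i-1, i lies in L(E, Phi), while every HL with
   H in G_Phi has its (i, i) entry divisible by delta. *)

From HB Require Import structures.
From mathcomp Require Import all_boot all_order all_algebra.
From mathcomp Require Import ring zify.
From Stdlib Require Import ClassicalEpsilon.
Set Implicit Arguments. Unset Strict Implicit. Unset Printing Implicit Defensive.
Import GRing.Theory.
Local Open Scope ring_scope.

Section Divisibility.
Variable R : idomainType.
Implicit Types a b c d u : R.

(* Unspecified unless [divides a b]. *)
Definition exquo a b : R := epsilon (inhabits 0) (fun c => b = c * a).

Lemma exquoP a b : divides a b -> b = exquo a b * a.
Proof. exact: (epsilon_spec _ (fun c => b = c * a)). Qed.

Lemma divides_refl a : divides a a.
Proof. by exists 1; rewrite mul1r. Qed.

Lemma divides_trans a b c : divides a b -> divides b c -> divides a c.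
Proof. by move=> [x ->] [y ->]; exists (y * x); rewrite mulrA. Qed.

Lemma divides_mulr a b c : divides a b -> divides a (b * c).
Proof. by move=> [x ->]; exists (c * x); ring. Qed.

Lemma divides_mull a b c : divides a b -> divides a (c * b).
Proof. by rewrite mulrC; apply: divides_mulr. Qed.

Lemma divides_add a b c : divides a b -> divides a c -> divides a (b + c).
Proof. by move=> [x ->] [y ->]; exists (x + y); rewrite mulrDl. Qed.

Lemma divides0 a : divides a 0.
Proof. by exists 0; rewrite mul0r. Qed.

Lemma divides_sum (I : finType) (P : pred I) (F : I -> R) a :
  (forall i, P i -> divides a (F i)) -> divides a (\sum_(i | P i) F i).
Proof. by move=> H; apply: big_ind => //; [apply: divides0|apply: divides_add]. Qed.

Lemma divides_unit d u : divides d u -> u \is a GRing.unit -> d \is a GRing.unit.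
Proof. by move=> [x ->]; rewrite unitrM => /andP[]. Qed.

Lemma divides1_unit d : divides d 1 -> d \is a GRing.unit.
Proof. by move/divides_unit; apply; rewrite unitr1. Qed.

Lemma divides_mul2r a b c : c != 0 -> divides (a * c) (b * c) -> divides a b.
Proof. by move=> c0 [x]; rewrite mulrA => /(mulIf c0) ->; exists x. Qed.

Lemma exquo_trans a b c : a != 0 ->
  divides a b -> divides b c -> exquo a c = exquo b c * exquo a b.
Proof.
move=> a0 ab bc; apply: (mulIf a0).
by rewrite -mulrA -!exquoP //; apply: divides_trans bc.
Qed.

Definition comaximal a b := exists x y, x * a + y * b = 1.

Lemma comaximal_divides a b c : comaximal a b -> divides a (b * c) -> divides a c.
Proof.
move=> [x [y Exy]] [z Ez]; exists (x * c + y * z).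
by rewrite -[c in LHS]mul1r -Exy mulrDl -(mulrA y) Ez; ring.
Qed.

Lemma comaximal_mulr a b c : comaximal a b -> comaximal a c -> comaximal a (b * c).
Proof.
move=> [x [y E]] [x' [y' E']]; exists (x * x' * a + x * y' * c + y * b * x'), (y * y').
rewrite -E' -[X in _ = X]mulr1 -E; ring.
Qed.

Lemma comaximal_unitr a b : b \is a GRing.unit -> comaximal a b.
Proof. by move=> Hb; exists 0, b^-1; rewrite mul0r add0r mulVr. Qed.

End Divisibility.

Lemma nonsing_dseq_divides (R : idomainType) n (e : 'I_n -> R) :
  nonsing_dseq e -> forall i j : 'I_n, (i <= j)%N -> divides (e i) (e j).
Proof.
move=> [_ chain] i j /subnKC; move: (j - i)%N => d; elim: d j => [|d IH] j Ej.
  have -> : j = i by apply/val_inj; rewrite /= -Ej addn0.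
  exact: divides_refl.
have jd : (i + d < n)%N by rewrite (leq_trans _ (ltn_ord j)) // -Ej addnS.
by apply: (divides_trans (IH (Ordinal jd) erefl)); apply: chain; rewrite /= -Ej addnS.
Qed.

Section ElementaryDivisorDomain.
Variable R : idomainType.
Hypothesis Hedd : elementary_divisor_domain R.

Lemma edd_gcd_factor (a b : R) :
  exists g a' b', [/\ a = a' * g, b = b' * g & comaximal a' b'].
Proof.
pose A : 'M[R]_(1, 2) := \matrix_(i, j) if j == 0 then a else b.
have [P [Q [HP HQ [Dd _]]]] := Hedd A.
set B := A *m Q.
have B01 : B 0 1 = 0.
  have -> : B = invmx P *m (P *m A *m Q) by rewrite -mulmxA mulKmx.
  by rewrite !mxE big_ord1 Dd ?mulr0.
have lift01 : lift 0 (0 : 'I_1) = 1 :> 'I_2 by apply/val_inj.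
have entryA j : A 0 j = invmx Q 0 j * B 0 0.
  rewrite -[A](mulmxK HQ) -/B mxE !big_ord_recl big_ord0 lift01 B01.
  by rewrite mul0r !addr0 mulrC.
exists (B 0 0), (invmx Q 0 0), (invmx Q 0 1); split.
- by rewrite -entryA mxE.
- by rewrite -entryA mxE.
- exists (Q 0 0), (Q 1 0).
  have := congr1 (fun M : 'M[R]_2 => M 0 0) (mulVmx HQ).
  by rewrite !mxE !big_ord_recl big_ord0 lift01 addr0 ![Q _ _ * _]mulrC.
Qed.

Lemma comaximalP (a b : R) :
  (forall d, divides d a -> divides d b -> d \is a GRing.unit) -> comaximal a b.
Proof.
move=> H; have [g [a' [b' [Ea Eb [x [y Exy]]]]]] := edd_gcd_factor a b.
have gU : g \is a GRing.unit by apply: H; [exists a'|exists b'].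
exists (x / g), (y / g); rewrite Ea Eb -Exy.
by rewrite !mulrA ![_ / g * _ * g]mulrAC !(divrK gU).
Qed.

Variable gcdf : R -> R -> R.
Hypothesis Hgcd : forall a b : R, is_gcd a b (gcdf a b).

Lemma gcd_divl (a b : R) : divides (gcdf a b) a. Proof. by have [] := Hgcd a b. Qed.
Lemma gcd_divr (a b : R) : divides (gcdf a b) b. Proof. by have [] := Hgcd a b. Qed.

Lemma comaximal_gcd_unit (a b : R) : gcdf a b \is a GRing.unit -> comaximal a b.
Proof.
move=> Hu; apply: comaximalP => d Ha Hb; have [_ _ H] := Hgcd a b.
exact: divides_unit (H d Ha Hb) Hu.
Qed.

Lemma divides_quot_gcd (p e l q : R) : p != 0 -> q * gcdf p e = p ->
  divides p (l * e) -> divides q l.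
Proof.
move=> p0 Hq Hd; have [_ [e' He] Hmax] := Hgcd p e.
set g := gcdf p e in Hq He Hmax.
have g0 : g != 0 by apply: contraNneq p0 => g0; rewrite -Hq g0 mulr0.
(* [q = p / (p, e)] and [e' = e / (p, e)] are comaximal. *)
have Hcop : comaximal q e'.
  apply: comaximalP => d [x Hx] [y Hy]; apply: divides1_unit.
  apply: (@divides_mul2r _ _ _ g g0); rewrite mul1r; apply: Hmax.
  - by rewrite -Hq Hx; exists x; rewrite mulrA.
  - by rewrite He Hy; exists y; rewrite mulrA.
apply: (comaximal_divides Hcop); rewrite mulrC.
move: Hd => [c]; rewrite He -Hq !mulrA => /(mulIf g0) ->.
by exists c.
Qed.

End ElementaryDivisorDomain.

Section BorderedMatrices.
Variable R : comUnitRingType.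

(* Row [h] is the [h]-th unit row; below and above the pivot, column [h] is [c];
   deleting row and column [h] leaves [A]. *)
Definition bordered_mx n (h : 'I_n.+1) (c : 'I_n -> R) (A : 'M[R]_n) : 'M[R]_n.+1 :=
  \matrix_(x, y) match unlift h x, unlift h y with
                 | Some i, Some j => A i j
                 | Some i, None => c i
                 | None, Some _ => 0
                 | None, None => 1 end.

Section Entries.
Variables (n : nat) (h : 'I_n.+1) (c : 'I_n -> R) (A : 'M[R]_n).

Lemma bordered_mx_hh : bordered_mx h c A h h = 1.
Proof. by rewrite mxE unlift_none. Qed.
Lemma bordered_mx_hl j : bordered_mx h c A h (lift h j) = 0.
Proof. by rewrite mxE unlift_none liftK. Qed.
Lemma bordered_mx_lh i : bordered_mx h c A (lift h i) h = c i.
Proof. by rewrite mxE unlift_none liftK. Qed.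
Lemma bordered_mx_ll i j : bordered_mx h c A (lift h i) (lift h j) = A i j.
Proof. by rewrite mxE !liftK. Qed.

End Entries.

Definition bordered_mxE := (bordered_mx_hh, bordered_mx_hl, bordered_mx_lh, bordered_mx_ll).

Lemma mul_bordered_mx n (h : 'I_n.+1) c c' (A A' : 'M[R]_n) :
  bordered_mx h c A *m bordered_mx h c' A' =
  bordered_mx h (fun i => c i + \sum_k A i k * c' k) (A *m A').
Proof.
apply/matrixP => x y; rewrite !mxE (bigD1_ord h) //=.
case: (unliftP h x) => [i ->|->]; case: (unliftP h y) => [j ->|->];
  rewrite !bordered_mxE ?mxE; under eq_bigr do rewrite !bordered_mxE.
all: rewrite ?mulr0 ?mulr1 ?mul1r ?add0r //.
all: by rewrite big1 ?addr0 // => k _; rewrite mul0r.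
Qed.

Lemma det_bordered_mx n (h : 'I_n.+1) c (A : 'M[R]_n) : \det (bordered_mx h c A) = \det A.
Proof.
rewrite (expand_det_row _ h) (bigD1_ord h) //= big1 ?addr0; last first.
  by move=> j _; rewrite bordered_mx_hl mul0r.
rewrite bordered_mx_hh mul1r /cofactor -signr_odd addnn odd_double mul1r.
by congr (\det _); apply/matrixP => i j; rewrite !mxE !liftK.
Qed.

Lemma unitmx_bordered_mx n (h : 'I_n.+1) c (A : 'M[R]_n) :
  (bordered_mx h c A \in unitmx) = (A \in unitmx).
Proof. by rewrite !unitmxE det_bordered_mx. Qed.

Definition embed2_mx N (p q : 'I_N) (a b c d : R) : 'M[R]_N :=
  \matrix_(x, y) if x == p then (if y == p then a else if y == q then b else 0)
                 else if x == q then (if y == p then c else if y == q then d else 0)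
                 else (x == y)%:R.

Section Embed2.
Variables (N : nat) (p q : 'I_N).

Lemma sum_pick2 (pq : p != q) (u v : R) (F : 'I_N -> R) :
  \sum_k (if k == p then u else if k == q then v else 0) * F k = u * F p + v * F q.
Proof.
rewrite (bigD1 p) //= eqxx (bigD1 q) 1?eq_sym //= (negPf pq) eqxx big1 ?addr0 //.
by move=> k /andP[kp kq]; rewrite (negPf kp) (negPf kq) mul0r.
Qed.

Lemma sum_delta (x : 'I_N) (F : 'I_N -> R) : \sum_k (x == k)%:R * F k = F x.
Proof.
rewrite (bigD1 x) //= eqxx mul1r big1 ?addr0 // => k kx.
by rewrite eq_sym (negPf kx) mul0r.
Qed.

Lemma embed2_mulmx (pq : p != q) a b c d (A : 'M[R]_N) x y :
  (embed2_mx p q a b c d *m A) x y =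
  if x == p then a * A p y + b * A q y
  else if x == q then c * A p y + d * A q y else A x y.
Proof.
rewrite mxE; under eq_bigr do rewrite mxE.
by case: ifP => _; [|case: ifP => _]; rewrite ?(sum_pick2 pq) ?sum_delta.
Qed.

Lemma mulmx_embed2 (pq : p != q) a b c d (A : 'M[R]_N) x y :
  (A *m embed2_mx p q a b c d) x y =
  if y == p then A x p * a + A x q * c
  else if y == q then A x p * b + A x q * d else A x y.
Proof.
have -> : (A *m embed2_mx p q a b c d) x y = (A *m embed2_mx p q a b c d)^T y x.
  by rewrite [RHS]mxE.
rewrite trmx_mul.
have -> : (embed2_mx p q a b c d)^T = embed2_mx p q a c b d.
  apply/matrixP => i j; rewrite !mxE.
  by do ![case: eqP => ? //=]; subst; rewrite ?eqxx in pq.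
by rewrite (embed2_mulmx pq) !mxE ![_ * A _ _]mulrC.
Qed.

Lemma embed2_mx_unit (pq : p != q) a b c d : a * d - b * c = 1 -> embed2_mx p q a b c d \in unitmx.
Proof.
move=> det1; suff: embed2_mx p q a b c d *m embed2_mx p q d (- b) (- c) a = 1%:M.
  by case/mulmx1_unit.
apply/matrixP => x y; rewrite (embed2_mulmx pq) !mxE.
do ![case: eqP => ? //=]; subst; rewrite ?eqxx in pq => //;
  rewrite ?mulr0 ?mulr1 ?addr0 ?add0r //; by rewrite -det1; ring.
Qed.

End Embed2.

Lemma unit_row_bordered_mx n (h : 'I_n.+1) (X : 'M[R]_n.+1) :
  (forall j, X h j = (h == j)%:R) ->
  X = bordered_mx h (fun i => X (lift h i) h) (\matrix_(i, j) X (lift h i) (lift h j)).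
Proof.
move=> Xh; apply/matrixP => x y.
case: (unliftP h x) => [i ->|->]; case: (unliftP h y) => [j ->|->];
  by rewrite bordered_mxE ?mxE ?Xh ?eqxx ?(negPf (neq_lift _ _)).
Qed.

End BorderedMatrices.

Lemma triangular_row_completion (R : idomainType) :
  elementary_divisor_domain R -> forall m (u : 'I_m.+1 -> R),
  exists (g : R) (K : 'M[R]_m.+1), [/\ K \in unitmx, forall j, u j = g * K ord0 j &
    forall i j : 'I_m.+1, (0 < i < j)%N -> K i j = 0].
Proof.
move=> Hedd; elim=> [|m IH] u.
  exists (u ord0), 1%:M; split=> [||i j]; first exact: unitmx1.
    by move=> j; rewrite (ord1 j) mxE eqxx mulr1.
  by rewrite (ord1 i).
have [g' [K' [K'U u'E K'tri]]] := IH (fun j => u (lift ord_max j)).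
have [g [a [b [g'E umaxE [x [y Exy]]]]]] := edd_gcd_factor Hedd g' (u ord_max).
have p0m : (ord0 : 'I_m.+2) != ord_max by rewrite -val_eqE.
have lift0 : lift ord_max ord0 = ord0 :> 'I_m.+2 by apply/val_inj.
pose K := embed2_mx ord0 ord_max a b (- y) x *m bordered_mx ord_max (fun _ => 0) K'.
exists g, K; split.
- rewrite unitmx_mul unitmx_bordered_mx K'U andbT embed2_mx_unit //.
  by rewrite -Exy; ring.
- move=> j; rewrite (embed2_mulmx p0m) eqxx -lift0.
  case: (unliftP ord_max j) => [j' ->|->]; rewrite !bordered_mxE.
    by rewrite mulr0 addr0 u'E g'E mulrCA mulrA.
  by rewrite mulr0 add0r mulr1 umaxE mulrC.
- move=> i j /andP[i0 ij]; rewrite (embed2_mulmx p0m).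
  have -> : (i == ord0) = false by apply/negbTE; rewrite -val_eqE /= -lt0n.
  have im : i != ord_max by rewrite -val_eqE /= neq_ltn (leq_trans ij) // -ltnS.
  case: (unliftP ord_max i) i0 im ij => [i' ->|->] i0 im ij; last by rewrite eqxx in im.
  rewrite (negPf im); case: (unliftP ord_max j) ij => [j' ->|->] ij; rewrite !bordered_mxE //.
  by apply: K'tri; move: i0 ij; rewrite !lift_max => -> ->.
Qed.

Section DiagonalDivisibility.
Variables (R : idomainType) (n : nat).
Implicit Types (phi psi : 'I_n -> R) (A B H : 'M[R]_n).

Definition diag_dvd phi psi A := forall i j, divides (phi i) (A i j * psi j).

Lemma mulmx_diagmE psi A i j : (A *m diagm psi) i j = A i j * psi j.
Proof. by rewrite mul_mx_diag !mxE. Qed.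

Lemma mul_diagmmxE phi A i j : (diagm phi *m A) i j = phi i * A i j.
Proof. by rewrite mul_diag_mx !mxE. Qed.

Lemma diag_dvdP phi psi A :
  diag_dvd phi psi A <-> exists S, A *m diagm psi = diagm phi *m S.
Proof.
split=> [dvdA|[S AS] i j].
  exists (\matrix_(i, j) exquo (phi i) (A i j * psi j)).
  by apply/matrixP => i j; rewrite mulmx_diagmE mul_diagmmxE mxE [RHS]mulrC -(exquoP (dvdA i j)).
by exists (S i j); rewrite -mulmx_diagmE AS mul_diagmmxE mulrC.
Qed.

Lemma unitmx_diagm_conj phi A B : (forall i, phi i != 0) ->
  A *m diagm phi = diagm phi *m B -> (A \in unitmx) = (B \in unitmx).
Proof.
move=> phi0 AB; have detphi0 : \det (diagm phi) != 0.
  by rewrite det_diag; apply/prodf_neq0 => i _; rewrite mxE.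
have := congr1 determinant AB; rewrite !det_mulmx [RHS]mulrC => /(mulIf detphi0).
by rewrite !unitmxE => ->.
Qed.

Lemma G_PhiP phi H : (forall i, phi i != 0) ->
  G_Phi (diagm phi) H <-> H \in unitmx /\ diag_dvd phi phi H.
Proof.
move=> phi0; split=> [[HU [K [_ HK]]]|[HU /diag_dvdP[K HK]]].
  by split=> //; apply/diag_dvdP; exists K.
by split=> //; exists K; rewrite -(unitmx_diagm_conj phi0 HK).
Qed.

Lemma L_setP eps phi L :
  L_set (diagm eps) (diagm phi) L <-> L \in unitmx /\ diag_dvd phi eps L.
Proof. by split=> [[LU /diag_dvdP]|[LU /diag_dvdP]]. Qed.

Lemma diag_dvd_mul phi psi H A :
  diag_dvd phi phi H -> diag_dvd phi psi A -> diag_dvd phi psi (H *m A).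
Proof.
move=> dvdH dvdA i j; rewrite mxE mulr_suml; apply: divides_sum => k _.
have [c Ec] := dvdA k j; rewrite -mulrA Ec mulrCA.
exact/divides_mull/dvdH.
Qed.

Lemma G_Phi_mul phi H1 H2 :
  G_Phi (diagm phi) H1 -> G_Phi (diagm phi) H2 -> G_Phi (diagm phi) (H1 *m H2).
Proof.
move=> [U1 [K1 [V1 E1]]] [U2 [K2 [V2 E2]]]; split; first by rewrite unitmx_mul U1.
exists (K1 *m K2); split; first by rewrite unitmx_mul V1.
by rewrite -mulmxA E2 mulmxA E1 mulmxA.
Qed.

Lemma G_Phi_inv phi H : G_Phi (diagm phi) H -> G_Phi (diagm phi) (invmx H).
Proof.
move=> [U [K [V E]]]; split; first by rewrite unitmx_inv.
exists (invmx K); split; first by rewrite unitmx_inv.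
by rewrite -[LHS](mulmxK V) -[invmx H *m _ *m K]mulmxA -E mulKmx.
Qed.

End DiagonalDivisibility.

Section Uniqueness.
Variables (R : idomainType) (gcdf : R -> R -> R) (K : R -> pred R).
Hypothesis HK : forall f, complete_residues f (K f).
Variables (n : nat) (eps phi : 'I_n -> R).
Hypothesis phi0 : forall i, phi i != 0.

Lemma V_set_entry_eq V1 V2 (i l : 'I_n) c :
  V_set gcdf K eps phi V1 -> V_set gcdf K eps phi V2 -> (l < i)%N ->
  V1 i l = c + V2 i l -> divides (phi i) (c * phi l) -> c = 0.
Proof.
move=> [_ [_ V1l]] [_ [_ V2l]] li V12 [x Ec].
have [q1 [f1 [k1 [Eq1 Ef1 k1K V1E]]]] := V1l i l li.
have [q2 [f2 [k2 [Eq2 Ef2 k2K V2E]]]] := V2l i l li.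
set g := gcdf (phi i) (eps l) in Eq1 Eq2 Ef1 Ef2.
have g0 : g != 0 by apply: contraNneq (phi0 i) => g0; rewrite -Eq1 g0 mulr0.
have q0 : q1 != 0 by apply: contraNneq (phi0 i) => q0; rewrite -Eq1 q0 mul0r.
have q12 : q2 = q1 by apply: (mulIf g0); rewrite Eq1 Eq2.
have f12 : f2 = f1 by apply: (mulIf (phi0 l)); rewrite Ef1 Ef2.
subst q2 f2.
have cE : c = x * q1 * f1 by apply: (mulIf (phi0 l)); rewrite Ec -Eq1 -Ef1; ring.
have k12 : k1 - k2 = x * f1.
  by apply: (mulfI q0); rewrite mulrBr -V1E -V2E V12 cE; ring.
have [k [_ kuniq]] := HK f1 k1.
have k1E : k = k1 by apply: kuniq; rewrite subrr; split=> //; apply: divides0.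
have k2E : k = k2 by apply: kuniq; rewrite k12; split=> //; exists x.
by apply: (addIr (V2 i l)); rewrite add0r -V12 V1E V2E -k1E -k2E.
Qed.

Lemma mulmx_unitri_col (W V : 'M[R]_n) (i l : 'I_n) :
  V l l = 1 -> (forall k : 'I_n, (k < l)%N -> V k l = 0) ->
  (forall k : 'I_n, (l < k)%N -> W i k = (i == k)%:R) ->
  (W *m V) i l = W i l + (if (l < i)%N then V i l else 0).
Proof.
move=> Vll Vup Wr; rewrite mxE (bigD1 l) //= Vll mulr1; congr (_ + _).
transitivity (\sum_(k | k != l) (i == k)%:R * V k l).
  apply: eq_bigr => k kl; case: (ltngtP k l) => [kl'|lk|/val_inj kE].
  - by rewrite Vup // !mulr0.
  - by rewrite Wr.
  - by rewrite kE eqxx in kl.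
case: ifP => li.
  rewrite (bigD1 i) /= ?eqxx ?mul1r; last by rewrite -val_eqE /= gtn_eqF.
  by rewrite big1 ?addr0 // => k /andP[_ ki]; rewrite eq_sym (negPf ki) mul0r.
apply: big1 => k kl; case: eqP => [ik|]; last by rewrite mul0r.
by rewrite -ik in kl *; rewrite Vup ?mulr0 //; move: li kl; rewrite -val_eqE /=; lia.
Qed.

Lemma V_set_unique V1 V2 W :
  V_set gcdf K eps phi V1 -> V_set gcdf K eps phi V2 -> diag_dvd phi phi W ->
  V1 = W *m V2 -> V1 = V2.
Proof.
move=> V1set V2set dvdW V1E; suff W1 : W = 1%:M by rewrite V1E W1 mul1mx.
have [V1d [V1u _]] := V1set; have [V2d [V2u _]] := V2set.
suff Wcol d (l : 'I_n) : (n - l <= d)%N -> forall i, W i l = (i == l)%:R.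
  by apply/matrixP => i l; rewrite (Wcol (n - l)%N) ?mxE.
elim: d l => [|d IH] l ld i; first by move: ld; rewrite leqn0 subn_eq0 leqNgt ltn_ord.
have Wr (k : 'I_n) : (l < k)%N -> W i k = (i == k)%:R by move=> lk; apply: IH; lia.
have := mulmx_unitri_col (V2d l) (fun k => V2u k l) Wr; rewrite -V1E.
case: (ltngtP i l) => [il|li|/val_inj ->].
- by rewrite V1u // addr0 -val_eqE /= (ltn_eqF il) => <-.
- rewrite -val_eqE /= (gtn_eqF li) => V1il.
  exact: (V_set_entry_eq V1set V2set li V1il (dvdW i l)).
- by rewrite V1d addr0 eqxx => <-.
Qed.

Lemma V_set_class_unique (V1 V2 H1 H2 L : 'M[R]_n) :
  V_set gcdf K eps phi V1 -> V_set gcdf K eps phi V2 ->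
  G_Phi (diagm phi) H1 -> G_Phi (diagm phi) H2 -> V1 = H1 *m L -> V2 = H2 *m L -> V1 = V2.
Proof.
move=> V1set V2set H1G H2G V1E V2E.
have [_ dvdW] := proj1 (G_PhiP _ phi0) (G_Phi_mul H1G (G_Phi_inv H2G)).
apply: (V_set_unique V1set V2set dvdW).
by rewrite -mulmxA V2E mulKmx //; case: H2G.
Qed.

End Uniqueness.

Definition kazimirskii_condition (R : idomainType) (gcdf : R -> R -> R) n (eps phi : 'I_n -> R) :=
  forall i j : 'I_n, (i : nat) = j.+1 -> ~ assoc (phi i) (phi j) ->
  forall q r delta : R,
    q * phi j = phi i -> r * gcdf (phi i) (eps j) = phi i ->
    divides delta q -> delta \isn't a GRing.unit ->
    gcdf delta r \isn't a GRing.unit.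

Section Necessity.
Variables (R : idomainType) (gcdf : R -> R -> R) (K : R -> pred R).
Hypothesis Hedd : elementary_divisor_domain R.
Hypothesis Hgcd : forall a b : R, is_gcd a b (gcdf a b).
Variables (n : nat) (eps phi : 'I_n -> R).
Hypothesis phi_dseq : nonsing_dseq phi.
Hypothesis phi_dvd_eps : forall i, divides (phi i) (eps i).

Lemma kazimirskii_condition_necessary :
  (forall L : 'M[R]_n, L_set (diagm eps) (diagm phi) L ->
     exists V : 'M[R]_n, V_set gcdf K eps phi V /\
       exists H : 'M[R]_n, G_Phi (diagm phi) H /\ V = H *m L) ->
  kazimirskii_condition gcdf eps phi.
Proof.
have [phi0 phi_chain] := phi_dseq.
move=> classV i j ij _ q r delta qE rE delta_q delta_nU; apply/negP => gcdU.
have [x [y Exy]] := comaximal_gcd_unit Hedd Hgcd gcdU.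
have ji : j != i by rewrite -val_eqE /= ij neq_ltn ltnSn.
pose L := embed2_mx j i x (- y) r delta.
have LU : L \in unitmx by apply: (embed2_mx_unit ji); rewrite -Exy; ring.
have dvdL : diag_dvd phi eps L.
  have phij_epsi : divides (phi j) (eps i).
    exact: divides_trans (phi_chain j i ij) (phi_dvd_eps i).
  have phii_r_epsj : divides (phi i) (r * eps j).
    by have [_ [e ->] _] := Hgcd (phi i) (eps j); exists e; rewrite -[in RHS]rE; ring.
  move=> a b; rewrite mxE.
  do ![case: eqP => [->|_]]; rewrite ?mul0r ?mul1r;
    by [apply: divides0 | apply: divides_mull | ].
have [V [[Vd _] [H [HG VE]]]] := classV L (proj2 (L_setP _ _ _) (conj LU dvdL)).
have [_ dvdH] := proj1 (G_PhiP H phi0) HG.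
have Hij : divides q (H i j).
  have [c Ec] := dvdH i j; exists c.
  by apply: (mulIf (phi0 j)); rewrite Ec -qE mulrA.
move/negP: delta_nU; apply; apply: divides1_unit.
rewrite -(Vd i) VE (mulmx_embed2 ji) eq_sym (negPf ji) eqxx.
apply: divides_add; last exact/divides_mull/divides_refl.
exact/divides_mulr/(divides_trans delta_q).
Qed.

End Necessity.

Section Lift.
Variables (R : idomainType) (n : nat).
Implicit Types (e phi psi : 'I_n.+1 -> R).

Lemma nonsing_dseq_lift e : nonsing_dseq e -> nonsing_dseq (fun i => e (lift ord0 i)).
Proof. by move=> [e0 chain]; split=> [i|i j ji]; [apply: e0|apply: chain; rewrite !lift0 ji]. Qed.

Lemma kazimirskii_condition_lift gcdf eps phi :
  kazimirskii_condition gcdf eps phi ->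
  kazimirskii_condition gcdf (fun i => eps (lift ord0 i)) (fun i => phi (lift ord0 i)).
Proof. by move=> HC i j ij; apply: HC; rewrite !lift0 ij. Qed.

Lemma diag_dvd_bordered_mx phi psi c (A : 'M[R]_n) :
  divides (phi ord0) (psi ord0) ->
  (forall i, divides (phi (lift ord0 i)) (c i * psi ord0)) ->
  diag_dvd (fun i => phi (lift ord0 i)) (fun i => psi (lift ord0 i)) A ->
  diag_dvd phi psi (bordered_mx ord0 c A).
Proof.
move=> dvd0 dvdc dvdA x y.
case: (unliftP ord0 x) => [i ->|->]; case: (unliftP ord0 y) => [j ->|->];
  rewrite bordered_mxE ?mul0r ?mul1r //; exact: divides0.
Qed.

Lemma V_set_bordered_mx gcdf (K : R -> pred R) eps phi y (V : 'M[R]_n) :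
  V_set gcdf K (fun i => eps (lift ord0 i)) (fun i => phi (lift ord0 i)) V ->
  (forall i, exists q f k, [/\ q * gcdf (phi (lift ord0 i)) (eps ord0) = phi (lift ord0 i),
     f * phi ord0 = gcdf (phi (lift ord0 i)) (eps ord0), k \in K f & y i = q * k]) ->
  V_set gcdf K eps phi (bordered_mx ord0 y V).
Proof.
move=> [Vd [Vu Vl]] Vy; split; [|split] => [x|x z|x z].
- by case: (unliftP ord0 x) => [i ->|->]; rewrite bordered_mxE.
- case: (unliftP ord0 x) => [i ->|->]; case: (unliftP ord0 z) => [j ->|->];
    rewrite bordered_mxE ?lift0 // ltnS; exact: Vu.
- case: (unliftP ord0 x) => [i ->|->]; case: (unliftP ord0 z) => [j ->|->];
    rewrite bordered_mxE ?lift0 ?ltnS; [exact: Vl|move=> _; exact: Vy|by []|by []].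
Qed.

End Lift.

Section Existence.
Variables (R : idomainType) (gcdf : R -> R -> R) (K : R -> pred R).
Hypothesis Hedd : elementary_divisor_domain R.
Hypothesis Hgcd : forall a b : R, is_gcd a b (gcdf a b).
Hypothesis HK : forall f, complete_residues f (K f).

Section FirstRow.
Variables (n : nat) (eps phi : 'I_n.+1 -> R) (L : 'M[R]_n.+1).
Hypotheses (eps_dseq : nonsing_dseq eps) (phi_dseq : nonsing_dseq phi).
Hypothesis cond : kazimirskii_condition gcdf eps phi.
Hypotheses (LU : L \in unitmx) (dvdL : diag_dvd phi eps L).

Lemma invmx_row0_col0 : \sum_k invmx L ord0 k * L k ord0 = 1.
Proof.
by have := congr1 (fun A : 'M[R]_n.+1 => A ord0 ord0) (mulVmx LU); rewrite !mxE eqxx.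
Qed.

Lemma comaximal_next_quotient d (s t : 'I_n.+1) : (t : nat) = s.+1 ->
  (forall k : 'I_n.+1, (k <= s)%N -> divides d (invmx L ord0 k)) ->
  comaximal d (exquo (phi s) (phi t)).
Proof.
move=> ts dM; have [phi0 _] := phi_dseq.
set a := exquo (phi s) (phi t).
have aE : phi t = a * phi s by apply/exquoP/nonsing_dseq_divides; rewrite ?ts.
pose r := exquo (gcdf (phi t) (eps s)) (phi t).
have rE : r * gcdf (phi t) (eps s) = phi t by rewrite -exquoP //; apply: gcd_divl.
have r_col (k : 'I_n.+1) : (s < k)%N -> divides r (L k ord0).
  move=> sk; apply: (divides_quot_gcd Hedd Hgcd (phi0 t) rE).
  have [c ->] := nonsing_dseq_divides eps_dseq (i := ord0) (j := s) (leq0n s).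
  rewrite mulrCA; apply/divides_mull/(divides_trans _ (dvdL k ord0)).
  by apply: nonsing_dseq_divides; rewrite ?ts.
apply: (comaximalP Hedd) => delta delta_d delta_a.
(* [delta] divides [invmx L ord0 k] for [k <= s], and [r] divides [L k ord0] for [k > s]. *)
have gcdU : gcdf delta r \is a GRing.unit.
  apply: divides1_unit; rewrite -invmx_row0_col0; apply: divides_sum => k _.
  case: (leqP k s) => [ks|sk].
  - apply/divides_mulr/(divides_trans (gcd_divl Hgcd delta r)).
    exact: divides_trans delta_d (dM k ks).
  - exact/divides_mull/(divides_trans (gcd_divr Hgcd delta r))/r_col.
have [aU|aN] := boolP (a \is a GRing.unit); first exact: divides_unit delta_a aU.
apply/negPn/negP => deltaN.
have not_assoc : ~ assoc (phi t) (phi s).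
  move=> [[c cE] _]; move/negP: aN; apply; apply/unitrPr; exists c.
  by apply: (mulIf (phi0 s)); rewrite mul1r [in RHS]cE aE; ring.
by move/negP: (cond ts not_assoc (esym aE) rE delta_a deltaN); rewrite gcdU.
Qed.

Lemma first_row_comaximal d :
  (forall j, divides d (invmx L ord0 j * exquo (phi ord0) (phi j))) -> d \is a GRing.unit.
Proof.
move=> du; have [phi0 _] := phi_dseq.
suff dM k (j : 'I_n.+1) : (j <= k)%N ->
    divides d (invmx L ord0 j) /\ comaximal d (exquo (phi ord0) (phi j)).
  apply: divides1_unit; rewrite -invmx_row0_col0; apply: divides_sum => k _.
  exact/divides_mulr/(dM n k (leq_ord k)).1.
elim: k j => [|k IH] j jk.
  have -> : j = ord0 by apply/val_inj; move: jk; rewrite leqn0 => /eqP.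
  have q1 : exquo (phi ord0) (phi ord0) = 1.
    by apply: (mulIf (phi0 ord0)); rewrite mul1r -exquoP //; apply: divides_refl.
  split; last by rewrite q1; apply/comaximal_unitr/unitr1.
  by have := du ord0; rewrite q1 mulr1.
case: (ltnP j k.+1) => [jk'|kj]; first exact: IH.
have sn : (k < n.+1)%N by move: (ltn_ord j) kj; lia.
have js : (j : nat) = (Ordinal sn).+1 by apply/eqP; rewrite eqn_leq jk kj.
have cj : comaximal d (exquo (phi ord0) (phi j)).
  set s := Ordinal sn in js *.
  have -> : exquo (phi ord0) (phi j) = exquo (phi s) (phi j) * exquo (phi ord0) (phi s).
    by apply: exquo_trans; [|apply: nonsing_dseq_divides..]; rewrite ?js.
  apply: comaximal_mulr; last exact: (IH s (leqnn k)).2.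
  by apply: comaximal_next_quotient js _ => l lk; exact: (IH l lk).1.
split=> //; apply: (comaximal_divides cj); rewrite mulrC; exact: du.
Qed.

Lemma first_row_reduction : exists Q : 'M[R]_n.+1,
  [/\ Q \in unitmx, diag_dvd phi phi Q & forall j, (Q *m L) ord0 j = (ord0 == j)%:R].
Proof.
have [phi0 _] := phi_dseq.
pose m (i j : 'I_n.+1) := exquo (phi j) (phi i).
have mE (i j : 'I_n.+1) : (j <= i)%N -> phi i = m i j * phi j.
  by move=> ji; apply/exquoP/nonsing_dseq_divides.
pose u j := invmx L ord0 j * m j ord0.
have [g [K0 [K0U uE K0tri]]] := triangular_row_completion Hedd u.
have gU : g \is a GRing.unit.
  by apply: first_row_comaximal => j; rewrite -/(u j) uE; exists (K0 ord0 j); rewrite mulrC.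
pose S := diag_mx (\row_i (if i == ord0 then g else 1)) *m K0.
have SU : S \in unitmx.
  rewrite unitmx_mul K0U andbT unitmxE det_diag big_ord_recl big1 ?mulr1 ?mxE ?eqxx //.
  by move=> i _; rewrite mxE eq_sym (negPf (neq_lift _ _)).
pose Q := \matrix_(i, j) if i == ord0 then invmx L ord0 j
                         else if (j <= i)%N then K0 i j * m i j else 0.
have QS : Q *m diagm phi = diagm phi *m S.
  apply/matrixP => i j; rewrite mulmx_diagmE mul_diagmmxE /S mul_diag_mx !mxE.
  case: eqP => [->|/eqP i0]; first by rewrite -uE /u (mE j ord0) //; ring.
  case: leqP => ji; first by rewrite (mE i j ji) mul1r; ring.
  by rewrite K0tri ?mulr0 ?mul0r // ji andbT lt0n.
exists Q; split.
- by rewrite (unitmx_diagm_conj phi0 QS).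
- by apply/diag_dvdP; exists S.
- move=> j; have := congr1 (fun A : 'M[R]_n.+1 => A ord0 j) (mulVmx LU).
  by rewrite !mxE => <-; apply: eq_bigr => k _; rewrite mxE eqxx.
Qed.

End FirstRow.

Lemma residue_entry_reduction (p d e z : R) : p != 0 ->
  divides d (gcdf p e) -> divides p (z * e) ->
  exists w q f k, [/\ q * gcdf p e = p, f * d = gcdf p e, k \in K f,
                      w + z = q * k & divides p (w * d)].
Proof.
move=> p0 d_gcd pze.
pose q := exquo (gcdf p e) p.
have qE : q * gcdf p e = p by rewrite -exquoP //; apply: gcd_divl.
pose f := exquo d (gcdf p e).
have fE : f * d = gcdf p e by rewrite -exquoP.
have [s sE] := divides_quot_gcd Hedd Hgcd p0 qE pze.
have [k [[kK [t tE]] _]] := HK f s.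
exists (- (t * q * f)), q, f, k; split=> //.
- by rewrite sE -[s](subrK k) tE; ring.
- by exists (- t); rewrite -[in RHS]qE -fE; ring.
Qed.

Lemma first_column_reduction n (eps phi : 'I_n.+1 -> R) (x : 'I_n -> R) (B H : 'M[R]_n) :
  nonsing_dseq phi -> (forall i, divides (phi i) (eps i)) ->
  diag_dvd phi eps (bordered_mx ord0 x B) ->
  diag_dvd (fun i => phi (lift ord0 i)) (fun i => phi (lift ord0 i)) H ->
  V_set gcdf K (fun i => eps (lift ord0 i)) (fun i => phi (lift ord0 i)) (H *m B) ->
  exists w, diag_dvd phi phi (bordered_mx ord0 w H) /\
    V_set gcdf K eps phi (bordered_mx ord0 w H *m bordered_mx ord0 x B).
Proof.
move=> phi_dseq phi_eps dvdX dvdH VHB; have [phi0 _] := phi_dseq.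
pose z i := \sum_k H i k * x k.
have dvdz i : divides (phi (lift ord0 i)) (z i * eps ord0).
  have dvd0 : diag_dvd phi phi (bordered_mx ord0 (fun _ => 0) H).
    apply: diag_dvd_bordered_mx dvdH; first exact: divides_refl.
    by move=> j; rewrite mul0r; apply: divides0.
  by have := diag_dvd_mul dvd0 dvdX (lift ord0 i) ord0; rewrite mul_bordered_mx bordered_mxE add0r.
pose reduced i v := exists q f k,
  [/\ q * gcdf (phi (lift ord0 i)) (eps ord0) = phi (lift ord0 i),
      f * phi ord0 = gcdf (phi (lift ord0 i)) (eps ord0), k \in K f,
      v + z i = q * k & divides (phi (lift ord0 i)) (v * phi ord0)].
have [w wE] : exists w, forall i, reduced i (w i).
  apply: ClassicalEpsilon.choice => i.
  apply: residue_entry_reduction (phi0 _) _ (dvdz i).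
  have [_ _ gcd_max] := Hgcd (phi (lift ord0 i)) (eps ord0); apply: gcd_max.
  - exact: nonsing_dseq_divides.
  - exact: phi_eps.
exists w; split.
  apply: diag_dvd_bordered_mx dvdH => [|i]; first exact: divides_refl.
  by have [? [? [? []]]] := wE i.
rewrite mul_bordered_mx; apply: V_set_bordered_mx VHB _ => i.
by have [q [f [k [? ? ? wzE _]]]] := wE i; exists q, f, k.
Qed.

Lemma kazimirskii_existence n (eps phi : 'I_n -> R) (L : 'M[R]_n) :
  nonsing_dseq eps -> nonsing_dseq phi -> (forall i, divides (phi i) (eps i)) ->
  kazimirskii_condition gcdf eps phi -> L \in unitmx -> diag_dvd phi eps L ->
  exists H, [/\ H \in unitmx, diag_dvd phi phi H & V_set gcdf K eps phi (H *m L)].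
Proof.
elim: n eps phi L => [|n IH] eps phi L eps_dseq phi_dseq phi_eps cond LU dvdL.
  by exists 1%:M; split; [exact: unitmx1|case|split; [case|split; case]].
have [Q [QU dvdQ QL0]] := first_row_reduction eps_dseq phi_dseq cond LU dvdL.
have XE := unit_row_bordered_mx QL0.
set x := fun i => _ in XE; set B := \matrix_(i, j) _ in XE.
have dvdX : diag_dvd phi eps (bordered_mx ord0 x B) by rewrite -XE; apply: diag_dvd_mul.
have BU : B \in unitmx by rewrite -(unitmx_bordered_mx ord0 x) -XE unitmx_mul QU.
have dvdB : diag_dvd (fun i => phi (lift ord0 i)) (fun i => eps (lift ord0 i)) B.
  by move=> i j; have := dvdX (lift ord0 i) (lift ord0 j); rewrite bordered_mxE.
have [H [HU dvdH VHB]] := IH _ _ B (nonsing_dseq_lift eps_dseq)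
  (nonsing_dseq_lift phi_dseq) (fun i => phi_eps _) (kazimirskii_condition_lift cond) BU dvdB.
have [w [dvdW VW]] := first_column_reduction phi_dseq phi_eps dvdX dvdH VHB.
exists (bordered_mx ord0 w H *m Q); split.
- by rewrite unitmx_mul unitmx_bordered_mx HU.
- exact: diag_dvd_mul.
- by rewrite -mulmxA XE.
Qed.

End Existence.

Unset Implicit Arguments.
Set Strict Implicit.

Theorem theorem5p7 (R : idomainType) (n : nat)
    (gcdf : R -> R -> R) (K : R -> pred R) (eps phi : 'I_n -> R) :
  elementary_divisor_domain R ->
  (forall a b : R, is_gcd a b (gcdf a b)) ->
  (forall f : R, complete_residues f (K f)) ->
  nonsing_dseq eps -> nonsing_dseq phi ->
  (forall i, divides (phi i) (eps i)) ->
  (forall L : 'M[R]_n, L_set (diagm eps) (diagm phi) L ->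
     exists! V : 'M[R]_n, V_set gcdf K eps phi V /\
       exists H : 'M[R]_n, G_Phi (diagm phi) H /\ V = H *m L)
  <->
  (forall i j : 'I_n, (i : nat) = j.+1 -> ~ assoc (phi i) (phi j) ->
     forall q r delta : R,
       q * phi j = phi i ->
       r * gcdf (phi i) (eps j) = phi i ->
       divides delta q -> delta \isn't a GRing.unit ->
       gcdf delta r \isn't a GRing.unit).
Proof.
move=> Hedd Hgcd HK eps_dseq phi_dseq phi_eps; have [phi0 _] := phi_dseq; split.
  move=> classV; apply: (kazimirskii_condition_necessary (K := K) Hedd Hgcd phi_dseq phi_eps).
  by move=> L /classV [V [VV _]]; exists V.
move=> cond L /L_setP [LU dvdL].
have [H [HU dvdH VHL]] :=
  kazimirskii_existence Hedd Hgcd HK eps_dseq phi_dseq phi_eps cond LU dvdL.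
have HG : G_Phi (diagm phi) H by apply/G_PhiP.
exists (H *m L); split=> [|V [VV [H' [H'G VE]]]]; first by split=> //; exists H.
exact: (V_set_class_unique HK phi0 VHL VV HG H'G erefl VE).
Qed.
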